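(* Let $R$ be a dp-finite ring such that $R/\mathfrak{m}$ is infinite for every maximal ideal $\mathfrak{m}$ of $R$. Then $\mathrm{br}(R)\le\mathrm{dp\text{-}rk}(R)$; in particular, $\mathrm{br}(R)$ is finite.
   Context: Rings are commutative and unital; $\mathrm{dp\text{-}rk}(R)$ denotes the dp-rank of the structure $(R,+,\cdot)$, and $R$ is dp-finite if this is finite. The breadth $\mathrm{br}(R)$ satisfies $\mathrm{br}(R)\le n$ iff for any $x_1,\ldots,x_{n+1}\in R$ there is $i$ such that the ideal generated by $x_1,\ldots,x_{n+1}$ equals the ideal generated by $\{x_j:j\neq i\}$. *)

From HB Require Import structures.
From mathcomp Require Import all_boot all_order all_algebra.
Set Implicit Arguments. Unset Strict Implicit. Unset Printing Implicit Defensive.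
Import GRing.Theory.
Local Open Scope ring_scope.

Inductive rterm : Type :=
  | RVar of nat | RZero | ROne | RAdd of rterm & rterm | ROpp of rterm | RMul of rterm & rterm.

Inductive rformula : Type :=
  | FEq of rterm & rterm | FTrue | FFalse | FNot of rformula
  | FAnd of rformula & rformula | FOr of rformula & rformula | FImp of rformula & rformula
  | FExists of nat & rformula | FForall of nat & rformula.

Section Semantics.
Variable R : comPzRingType.

Fixpoint teval (e : nat -> R) (t : rterm) : R :=
  match t with
  | RVar v => e v | RZero => 0 | ROne => 1
  | RAdd a b => teval e a + teval e b
  | ROpp a => - teval e a
  | RMul a b => teval e a * teval e b
  end.

Definition upd (e : nat -> R) (v : nat) (r : R) : nat -> R :=
  fun w => if w == v then r else e w.

Fixpoint holds (e : nat -> R) (f : rformula) : Prop :=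
  match f with
  | FEq a b => teval e a = teval e b
  | FTrue => True | FFalse => False
  | FNot g => ~ holds e g
  | FAnd g h => holds e g /\ holds e h
  | FOr g h => holds e g \/ holds e h
  | FImp g h => holds e g -> holds e h
  | FExists v g => exists r : R, holds (upd e v r) g
  | FForall v g => forall r : R, holds (upd e v r) g
  end.

(* environment for phi(x; y): variable 0 is x := a, variable k+1 is y_k := b k *)
Definition xenv (a : R) (b : nat -> R) : nat -> R :=
  fun v => if v is k.+1 then b k else a.

(* dp-rk(R) <= n : there is no ict-pattern of depth n+1 (for the home sort,
   x a single variable), stated via compactness with finite patterns in R. *)
Definition dp_rank_le (n : nat) : Prop :=
  ~ exists phi : 'I_n.+1 -> rformula,
      forall m : nat, exists b : 'I_n.+1 -> 'I_m -> (nat -> R),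
        forall eta : 'I_n.+1 -> 'I_m, exists a : R,
          forall (i : 'I_n.+1) (j : 'I_m), holds (xenv a (b i j)) (phi i) <-> j = eta i.

Definition is_ideal (I : R -> Prop) : Prop :=
  I 0 /\ (forall x y, I x -> I y -> I (x + y)) /\ (forall r x, I x -> I (r * x)).

Definition maximal_ideal (I : R -> Prop) : Prop :=
  is_ideal I /\ ~ I 1 /\
  forall J : R -> Prop, is_ideal J -> (forall x, I x -> J x) ->
    (forall x, J x <-> I x) \/ J 1.

(* R / I is infinite: no finite list of elements meets every coset of I *)
Definition infinite_quotient (I : R -> Prop) : Prop :=
  ~ exists s : seq R, forall x : R, exists2 y, y \in s & I (x - y).

Definition in_ideal_gen (k : nat) (x : 'I_k -> R) (P : pred 'I_k) (z : R) : Prop :=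
  exists c : 'I_k -> R, z = \sum_(j < k | P j) c j * x j.

Definition breadth_le (n : nat) : Prop :=
  forall x : 'I_n.+1 -> R, exists i : 'I_n.+1,
    forall z : R, in_ideal_gen x predT z <-> in_ideal_gen x (fun j => j != i) z.

End Semantics.

(* Suppose x_0, ..., x_n admit no redundant member, and let I_i be the ideal
   generated by the x_j with j <> i.  Then x_i is not in I_i, so the colon ideal
   (I_i : x_i) is proper and lies in a maximal ideal M_i.  As R/M_i is infinite,
   there are arbitrarily many r_(i,j) whose pairwise differences are not in M_i,
   i.e. (r_(i,j) - r_(i,j')) x_i is not in I_i.  The formulas
   phi_i(a; t, z) := "a - t lies in the ideal generated by the z_k, k <> i", with
   parameters t = r_(i,j) x_i and z = x, then form an ict-pattern of depth n+1:
   a = sum_k r_(k,eta k) x_k satisfies phi_i(a; r_(i,j) x_i, x) exactly when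
   j = eta i.  Hence dp-rk(R) > n. *)

From mathcomp Require Import all_boot all_order all_algebra.
From mathcomp Require Import boolp classical_sets.
Set Implicit Arguments. Unset Strict Implicit. Unset Printing Implicit Defensive.
Import GRing.Theory.
Local Open Scope ring_scope.

Section Ideals.
Variable R : comPzRingType.
Implicit Types (I : R -> Prop) (x y : R).

Lemma idealN I x : is_ideal I -> I x -> I (- x).
Proof. by case=> _ [_ idealM] Ix; rewrite -mulN1r; apply: idealM. Qed.

Lemma idealDl I x y : is_ideal I -> I x -> I (x + y) <-> I y.
Proof.
move=> idealI Ix; have [_ [idealD _]] := idealI.
split=> [Ixy|]; last exact: idealD.
by rewrite -(addKr x y); apply: idealD => //; apply: idealN.
Qed.

Lemma is_ideal_colon I y : is_ideal I -> is_ideal (fun r => I (r * y)).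
Proof.
case=> I0 [idealD idealM]; split; [|split].
- by rewrite mul0r.
- by move=> r s Ir Is; rewrite mulrDl; apply: idealD.
- by move=> r s Is; rewrite -mulrA; apply: idealM.
Qed.

Section Generated.
Variables (k : nat) (x : 'I_k -> R).

Lemma is_ideal_gen (P : pred 'I_k) : is_ideal (in_ideal_gen x P).
Proof.
split; [|split].
- by exists (fun=> 0); rewrite big1 // => j _; rewrite mul0r.
- move=> y z [c ->] [d ->]; exists (fun j => c j + d j).
  by rewrite -big_split; apply: eq_bigr => j _; rewrite mulrDl.
- move=> r y [c ->]; exists (fun j => r * c j).
  by rewrite mulr_sumr; apply: eq_bigr => j _; rewrite mulrA.
Qed.

Lemma in_ideal_genT (P : pred 'I_k) z : in_ideal_gen x P z -> in_ideal_gen x predT z.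
Proof.
case=> c ->; exists (fun j => if P j then c j else 0).
by rewrite big_mkcond; apply: eq_bigr => j _; case: (P j); rewrite ?mul0r.
Qed.

Lemma in_ideal_gen_neqP (i : 'I_k) z :
  in_ideal_gen x (fun j => j != i) z <->
  exists c : 'I_k -> R, c i = 0 /\ z = \sum_j c j * x j.
Proof.
split=> [[c ->]|[c [ci0 ->]]].
  exists (fun j => if j != i then c j else 0); split; first by rewrite eqxx.
  by rewrite big_mkcond; apply: eq_bigr => j _; case: (j != i); rewrite ?mul0r.
by exists c; rewrite (bigD1 i) //= ci0 mul0r add0r.
Qed.

Lemma in_ideal_gen_lincombB (i : 'I_k) (c : 'I_k -> R) t :
  in_ideal_gen x (fun j => j != i) (\sum_j c j * x j - t * x i) <->
  in_ideal_gen x (fun j => j != i) ((c i - t) * x i).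
Proof.
rewrite (bigD1 i) //= addrAC addrC -mulrBl.
by apply: idealDl; [apply: is_ideal_gen | exists c].
Qed.

Lemma redundant_generator (i : 'I_k) :
  in_ideal_gen x (fun j => j != i) (x i) ->
  forall z, in_ideal_gen x predT z <-> in_ideal_gen x (fun j => j != i) z.
Proof.
move=> xi_red z; split; last exact: in_ideal_genT.
case=> c ->; rewrite (bigD1 i) //= addrC.
apply/idealDl; first exact: is_ideal_gen; first by exists c.
by have [_ [_ idealM]] := is_ideal_gen (fun j => j != i); apply: idealM.
Qed.

End Generated.
End Ideals.

Section MaximalIdeals.
Local Open Scope classical_set_scope.
Variables (R : comPzRingType) (A : set R).
Hypotheses (idealA : is_ideal A) (properA : ~ A 1).

Lemma is_ideal_chain_bigcup (F : set (set R)) :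
  (forall B, F B -> is_ideal (A `|` B)) -> total_on F subset ->
  is_ideal (A `|` \bigcup_(B in F) B).
Proof.
move=> idealF totF.
have common y z : (A `|` \bigcup_(B in F) B) y -> (A `|` \bigcup_(B in F) B) z ->
    exists2 C, is_ideal C & [/\ C y, C z & C `<=` A `|` \bigcup_(B in F) B].
  have subF B : F B -> A `|` B `<=` A `|` \bigcup_(B in F) B.
    by move=> FB w [Aw|Bw]; [left | right; exists B].
  case=> [Ay|[B FB By]] [Az|[B' FB' Bz]].
  - by exists A => //; split=> // w Aw; left.
  - by exists (A `|` B'); [apply: idealF | split; [left|right|apply: subF]].
  - by exists (A `|` B); [apply: idealF | split; [right|left|apply: subF]].
  have [BB'|B'B] := totF B B' FB FB'.
  + by exists (A `|` B'); [apply: idealF | split; [right; apply: BB'|right|apply: subF]].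
  + by exists (A `|` B); [apply: idealF | split; [right|right; apply: B'B|apply: subF]].
split; [|split].
- by left; case: idealA.
- move=> y z Uy Uz; have [C [_ [idealDC _]] [Cy Cz CU]] := common y z Uy Uz.
  exact/CU/idealDC.
- move=> r y Uy; have [C [_ [_ idealMC]] [Cy _ CU]] := common y y Uy Uy.
  exact/CU/idealMC.
Qed.

Lemma exists_maximal_ideal : exists2 M, maximal_ideal M & A `<=` M.
Proof.
(* Adjoining A makes the union of the empty chain, set0, admissible for Zorn. *)
pose P B := is_ideal (A `|` B) /\ ~ (A `|` B) 1.
have [M [[idealM properM] maxM]] : exists M, P M /\ forall B, M `<` B -> ~ P B.
  apply: Zorn_bigcup => F FP totF; split.
    by apply: is_ideal_chain_bigcup => // B /FP[].
  by case=> [//|[B /FP[_ properB] B1]]; apply: properB; right.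
exists (A `|` M); last by move=> y Ay; left.
split=> //; split=> // J idealJ MJ.
have [J1|properJ] := pselect (J 1); first by right.
have AJ : A `|` J = J by apply/setUidr => y Ay; apply: MJ; left.
have PJ : P J by rewrite /P AJ.
left=> y; split=> [Jy|]; last exact: MJ.
apply: contrapT => notMy; apply: (maxM J) PJ; rewrite properEneq; split.
  by apply/eqP => MJeq; apply: notMy; right; rewrite MJeq.
by move=> w Mw; apply: MJ; right.
Qed.

End MaximalIdeals.

Section Residues.
Variable R : comPzRingType.
Implicit Types M : set R.

Lemma infinite_quotient_avoid M (s : seq R) :
  infinite_quotient M -> exists x, forall y, y \in s -> ~ M (x - y).
Proof.
move=> infM; apply: contrapT => no_x; apply: infM; exists s => x.
apply: contrapT => notx; apply: no_x; exists x => y ys Mxy; apply: notx; by exists y.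
Qed.

Lemma infinite_quotient_residues M m : is_ideal M -> infinite_quotient M ->
  exists r : 'I_m -> R, forall j j', M (r j - r j') -> j = j'.
Proof.
move=> idealM infM.
suff [s [_ incong]] : exists s : seq R, size s = m /\ forall j j',
    (j < m)%N -> (j' < m)%N -> M (s`_j - s`_j') -> j = j'.
  by exists (fun j => s`_j) => j j' /(incong _ _ (ltn_ord j) (ltn_ord j')) /val_inj.
elim: m => [|m [s [size_s incong]]]; first by exists [::].
have [x xP] := infinite_quotient_avoid s infM.
have s_j j : (j < m)%N -> s`_j \in s by move=> jm; rewrite mem_nth ?size_s.
exists (x :: s); split=> [|[|j] [|j'] //= jm j'm]; first by rewrite /= size_s.
- by move/xP; rewrite s_j.
- by rewrite -opprB => /(idealN idealM); rewrite opprK => /xP; rewrite s_j.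
- by move/incong => -> //.
Qed.

Lemma colon_ideal_residues
    (hinf : forall M : R -> Prop, maximal_ideal M -> infinite_quotient M)
    (I : R -> Prop) (y : R) m :
  is_ideal I -> ~ I y -> exists r : 'I_m -> R, forall j j', I ((r j - r j') * y) -> j = j'.
Proof.
move=> idealI notIy.
have [|M maxM colonM] := exists_maximal_ideal (is_ideal_colon y idealI).
  by rewrite mul1r.
have [r incong] := infinite_quotient_residues m maxM.1 (hinf M maxM).
by exists r => j j' /colonM /incong.
Qed.

End Residues.

Section Formulas.
Variable R : comPzRingType.
Implicit Types (e : nat -> R) (f : rformula).

Lemma holds_foldr_exists f (vs : seq nat) e :
  holds e (foldr FExists f vs) <->
  exists c : nat -> R, holds (fun w => if w \in vs then c w else e w) f.
Proof.
elim: vs e => [|v vs IH] e /=; first by split=> [fe|[]]; first exists e.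
have env r c : (fun w => if w \in vs then c w else upd e v r w) =
    (fun w => if w \in v :: vs then (if w \in vs then c w else r) else e w).
  apply: funext => w; rewrite in_cons /upd.
  by case: (w \in vs); case: eqP; rewrite ?orbT.
split=> [[r /IH[c fc]]|[c fc]].
  by exists (fun w => if w \in vs then c w else r); rewrite -env.
exists (c v); apply/IH; exists c; rewrite env.
congr (holds _ f): fc; apply: funext => w; rewrite in_cons.
by case: eqP => [->|]; case: (_ \in vs).
Qed.

Definition tsum (ts : seq rterm) : rterm := foldr RAdd RZero ts.

Lemma teval_tsum e ts : teval e (tsum ts) = \sum_(t <- ts) teval e t.
Proof. by elim: ts => [|t ts IH]; rewrite ?big_nil ?big_cons //= IH. Qed.

Definition lincomb_term n : rterm :=
  tsum [seq RMul (RVar (n.+3 + k)) (RVar k.+2) | k <- iota 0 n.+1].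

Lemma teval_lincomb e n :
  teval e (lincomb_term n) = \sum_(k < n.+1) e (n.+3 + k)%N * e k.+2.
Proof. by rewrite teval_tsum big_map -val_enum_ord big_map big_enum. Qed.

(* Variable 0 is the home-sort variable a, 1 is t, k.+2 is the generator z_k and
   n.+3 + k the coefficient c_k; the formula says a - t = sum_k c_k z_k with c_i = 0. *)
Definition coset_formula n i : rformula :=
  foldr FExists
    (FAnd (FEq (RVar (n.+3 + i)) RZero) (FEq (RVar 0) (RAdd (RVar 1) (lincomb_term n))))
    (iota n.+3 n.+1).

Definition coset_params n (x : 'I_n.+1 -> R) (t : R) : nat -> R :=
  fun v => if v is k.+1 then x (inord k) else t.

Lemma holds_coset_formula n (x : 'I_n.+1 -> R) (i : 'I_n.+1) a t :
  holds (xenv a (coset_params x t)) (coset_formula n i) <->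
  in_ideal_gen x (fun j => j != i) (a - t).
Proof.
rewrite holds_foldr_exists in_ideal_gen_neqP.
pose E c w := if w \in iota n.+3 n.+1 then c w else xenv a (coset_params x t) w.
have E_small c w : (w < n.+3)%N -> E c w = xenv a (coset_params x t) w.
  by move=> wn; rewrite /E mem_iota leqNgt wn.
have E_coef c (k : 'I_n.+1) : E c (n.+3 + k)%N = c (n.+3 + k)%N.
  by rewrite /E mem_iota leq_addr ltn_add2l ltn_ord.
have E_gen c (k : 'I_n.+1) : E c k.+2 = x k.
  by rewrite E_small /= ?inord_val // 2!ltnS ltn_ord.
(* [holds (E c)] of the body, unfolded by hand since [simpl] would expand [lincomb_term] *)
have body_iff c :
    E c (n.+3 + i)%N = 0 /\ E c 0%N = E c 1%N + teval (E c) (lincomb_term n) <->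
    c (n.+3 + i)%N = 0 /\ a - t = \sum_(k < n.+1) c (n.+3 + k)%N * x k.
  have sumE : \sum_(k < n.+1) E c (n.+3 + k)%N * E c k.+2 =
               \sum_(k < n.+1) c (n.+3 + k)%N * x k.
    by apply: eq_bigr => k _; rewrite E_coef E_gen.
  rewrite teval_lincomb sumE E_coef !E_small //=.
  split=> -[-> aE]; split=> //; first by rewrite aE addrC addKr.
  by rewrite -aE addrC subrK.
split=> [[c /body_iff[ci0 ->]]|[c [ci0 atE]]].
  by exists (fun k => c (n.+3 + k)%N).
exists (fun w => c (inord (w - n.+3))); apply/body_iff.
rewrite addKn inord_val atE; split=> //.
by apply: eq_bigr => k _; rewrite addKn inord_val.
Qed.

End Formulas.

Theorem lemma5p6 (R : comPzRingType)
  (hinf : forall I : R -> Prop, maximal_ideal I -> infinite_quotient I)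
  (n : nat) (hdp : dp_rank_le R n) : breadth_le R n.
Proof.
move=> x; apply: contrapT => no_redundant.
have irredundant i : ~ in_ideal_gen x (fun j => j != i) (x i).
  by move=> xi_red; apply: no_redundant; exists i; apply: redundant_generator.
apply: hdp; exists (coset_formula n) => m.
have /choice[r incong] : forall i, exists r : 'I_m -> R, forall j j',
    in_ideal_gen x (fun k => k != i) ((r j - r j') * x i) -> j = j'.
  move=> i; exact: colon_ideal_residues hinf _ _ _ (is_ideal_gen _ _) (irredundant i).
exists (fun i j => coset_params x (r i j * x i)) => eta.
exists (\sum_k r k (eta k) * x k) => i j.
rewrite holds_coset_formula in_ideal_gen_lincombB.
split=> [/incong -> // | ->].
by rewrite subrr mul0r; case: (is_ideal_gen x (fun k => k != i)).
Qed.
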